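(* Let $d\ge3$ and let $C$ be a $d$-dimensional Archimedean copula with Williamson measure $\gamma$. Then $C$ is strict if and only if $0$ lies in the support of $\gamma$, i.e. if and only if $\gamma([0,r))>0$ for every $r>0$.
   Context: An Archimedean generator is a continuous non-increasing $\psi:[0,\infty)\to[0,1]$ with $\psi(0)=1$, $\lim_{z\to\infty}\psi(z)=0$, strictly decreasing on $[0,\inf\{z:\psi(z)=0\}]$, normalized by $\psi(1)=1/2$; pseudo-inverse $\varphi(y)=\inf\{z\in[0,\infty]:\psi(z)=y\}$. $C(\mathbf{u})=\psi(\sum_{i=1}^d\varphi(u_i))$ is a $d$-dimensional Archimedean copula iff $(-1)^{d-2}\psi^{(d-2)}$ exists on $(0,\infty)$ and is non-negative, non-increasing and convex. $C$ (and $\psi$) is strict if $\varphi(0)=\infty$. The Williamson measure of $\psi$ is the unique probability measure $\gamma$ on $\mathcal{B}([0,\infty))$ with $\gamma(\{0\})=0$ and $\psi(z)=\int_{[0,\infty)}(1-tz)_+^{d-1}\,d\gamma(t)$ for all $z>0$. *)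

From HB Require Import structures.
From mathcomp Require Import all_boot all_order all_algebra.
From mathcomp Require Import all_classical all_reals all_analysis.
Set Implicit Arguments. Unset Strict Implicit. Unset Printing Implicit Defensive.
Import Order.TTheory GRing.Theory Num.Theory.
Import numFieldNormedType.Exports.
Local Open Scope classical_set_scope.
Local Open Scope ring_scope.

Section Arch.
Context {R : realType}.

(* pseudo-inverse phi(y) = inf { z in [0,oo] : psi z = y }, with the
   convention psi(+oo) = 0 (lim_{z->oo} psi z = 0), so +oo belongs to the
   set exactly when y = 0. *)
Definition pinv (psi : R -> R) (y : R) : \bar R :=
  ereal_inf ([set (z%:E)%E | z in [set z : R | 0 <= z /\ psi z = y]]
             `|` [set (+oo)%E | _ in [set _ : unit | y = 0]]).

Definition arch_generator (psi : R -> R) : Prop :=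
  [/\ {within `[0, +oo[, continuous psi},
      (forall z, 0 <= z -> 0 <= psi z <= 1),
      psi 0 = 1 &
      psi @ +oo --> 0] /\
  [/\
      (forall x y, 0 <= x -> x <= y -> psi y <= psi x),
      (forall x y, 0 <= x -> x < y -> (y%:E <= pinv psi 0)%E -> psi y < psi x)
    & psi 1 = 2^-1].

(* C = psi(sum phi(u_i)) is a d-dimensional Archimedean copula:
   (-1)^(d-2) psi^(d-2) exists on (0,oo) and is non-negative,
   non-increasing and convex there. *)
Definition arch_copula (d : nat) (psi : R -> R) : Prop :=
  arch_generator psi /\
  let g := fun x => (-1) ^+ (d - 2) * (derive1n (d - 2) psi) x in
  [/\ (forall k, (k < d - 2)%N -> forall x, 0 < x ->
          derivable (derive1n k psi) x 1),
      (forall x, 0 < x -> 0 <= g x),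
      (forall x y, 0 < x -> x <= y -> g y <= g x)
    & (forall x y t, 0 < x -> 0 < y -> 0 <= t <= 1 ->
          g (t * x + (1 - t) * y) <= t * g x + (1 - t) * g y)].

Definition strict_gen (psi : R -> R) : Prop := pinv psi 0 = (+oo)%E.

(* Williamson measure of psi (d-dimensional): a probability measure on the
   Borel sets of [0,oo) (represented as a probability on R giving full mass
   to [0,oo)), with no atom at 0, and
   psi z = \int (1 - t z)_+^(d-1) dgamma(t) for z > 0. *)
Definition williamson_measure (d : nat) (psi : R -> R)
    (gamma : probability R R) : Prop :=
  [/\ gamma [set` `[0, +oo[] = 1%E,
      gamma [set 0] = 0%E
    & forall z : R, 0 < z ->
        (psi z)%:E = (\int[gamma]_(t in [set` `[0%R, +oo[]) (Num.max (1 - t * z) 0 ^+ (d - 1))%:E)%E].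

End Arch.

(* A d-dimensional Williamson representation gives psi(z) = E[(1 - t z)_+^(d-1)], whose integrand
   lies between 2^-(d-1) on [0, 1/(2z)) and the indicator of [0, 1/z). Hence psi(z) = 0 exactly
   when gamma has no mass near 0 at scale 1/z, and strictness (psi never vanishing) is equivalent
   to 0 being in the support of gamma. *)
From Pilot Require Import Defs.
From HB Require Import structures.
From mathcomp Require Import all_boot all_order all_algebra.
From mathcomp Require Import all_classical all_reals all_analysis.
From mathcomp Require Import measurable_realfun lra.
Import Order.TTheory GRing.Theory Num.Theory.
Local Open Scope classical_set_scope.
Local Open Scope ring_scope.

Lemma strict_genP (R : realType) (psi : R -> R) :
  strict_gen psi <-> (forall z, 0 <= z -> psi z != 0).
Proof.
rewrite /strict_gen; split.
- move=> psi_strict z z_ge0; apply/eqP => psiz0.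
  have : (Defs.pinv psi 0 <= z%:E)%E by apply: ereal_inf_lbound; left; exists z.
  by rewrite psi_strict.
- move=> psi_neq0; apply/eqP; rewrite eq_le leey /=.
  apply: le_ereal_inf_tmp => _ [[x [x_ge0 psix] <-]|[u _ <-]] //.
  by move: (psi_neq0 x x_ge0); rewrite psix eqxx.
Qed.

Section WilliamsonKernel.
Context {R : realType}.

Definition williamson_kernel (n : nat) (z t : R) : R := Num.max (1 - t * z) 0 ^+ n.

Lemma williamson_kernel_ge0 n z t : 0 <= williamson_kernel n z t.
Proof. by rewrite exprn_ge0 // le_max lexx orbT. Qed.

Lemma measurable_williamson_kernel n z (D : set R) :
  measurable_fun D (williamson_kernel n z).
Proof.
apply: measurable_funX; apply: measurable_maxr; last exact: measurable_cst.
apply: measurable_funB; first exact: measurable_cst.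
by apply: measurable_funM => //; exact: measurable_cst.
Qed.

Lemma williamson_kernel_le_indic n z t : (0 < n)%N -> 0 <= t -> 0 < z ->
  williamson_kernel n z t <= \1_[set` `[0, z^-1[] t.
Proof.
move=> n_gt0 t_ge0 z_gt0; rewrite /williamson_kernel indicE.
have [t_lt|t_ge] := ltP t z^-1.
  rewrite mem_set /=; last by rewrite in_itv /= t_ge0 t_lt.
  apply: exprn_ile1; first by rewrite le_max lexx orbT.
  by rewrite ge_max ler01 andbT lerBlDr lerDl mulr_ge0 // ltW.
have -> : Num.max (1 - t * z) 0 = 0.
  by apply/max_idPr; rewrite subr_le0 -ler_pdivrMr // div1r.
rewrite memNset /=; last by rewrite in_itv /= ltNge t_ge andbF.
by rewrite expr0n eqn0Ngt n_gt0.
Qed.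

Lemma williamson_kernel_ge_indic n z t : 0 < z ->
  2^-n * \1_[set` `[0, (2 * z)^-1[] t <= williamson_kernel n z t.
Proof.
move=> z_gt0; rewrite /williamson_kernel indicE.
have [|_] := boolP (t \in _); last by rewrite mulr0 williamson_kernel_ge0.
rewrite inE /= in_itv /= => /andP[_ t_lt].
rewrite mulr1 -exprVn; apply: lerXn2r; rewrite ?nnegrE ?invr_ge0 ?le_max ?lexx ?orbT //.
have tz_lt : t * z < 2^-1 by rewrite -ltr_pdivlMr // -invfM.
by apply/orP; left; lra.
Qed.

Variable mu : {measure set R -> \bar R}.

Lemma williamson_integral_le_measure n z : (0 < n)%N -> 0 < z ->
  (\int[mu]_(t in [set` `[0%R, +oo[]) (williamson_kernel n z t)%:E <=
   mu [set` `[0%R, z^-1%R[])%E.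
Proof.
move=> n_gt0 z_gt0.
apply: (@le_trans _ _ (\int[mu]_(t in [set` `[0%R, +oo[]) (\1_[set` `[0, z^-1[] t)%:E)%E).
  apply: ge0_le_integral => //.
  - by move=> t _; rewrite lee_fin williamson_kernel_ge0.
  - by apply/measurable_EFinP; exact: measurable_williamson_kernel.
  - by apply/measurable_EFinP; apply: measurable_indic; exact: measurable_itv.
  - move=> t; rewrite /= in_itv /= andbT => t_ge0.
    by rewrite lee_fin williamson_kernel_le_indic.
by rewrite integral_indic ?measurable_itv //; exact: measureIl.
Qed.

Lemma williamson_integral_ge_measure n z : 0 < z ->
  ((2^-n)%:E * mu [set` `[0%R, (2 * z)^-1%R[] <=
   \int[mu]_(t in [set` `[0%R, +oo[]) (williamson_kernel n z t)%:E)%E.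
Proof.
move=> z_gt0; set A := [set` `[0, (2 * z)^-1[].
have mA : measurable A by exact: measurable_itv.
have A_sub : A `<=` [set` `[0%R, +oo[].
  by move=> t; rewrite /= !in_itv /= andbT => /andP[].
rewrite -[X in (_ * mu X)%E](setIidl A_sub) -integral_indic //.
rewrite -(integralZl_indic (measurable_itv _) (fun=> A)) //; last first.
  by move=> /ltW; rewrite leNgt invr_gt0 exprn_gt0.
apply: ge0_le_integral => //.
- apply/measurable_EFinP; apply: measurable_funM; first exact: measurable_cst.
  exact: measurable_indic.
- by apply/measurable_EFinP; exact: measurable_williamson_kernel.
- by move=> t _; rewrite lee_fin williamson_kernel_ge_indic.
Qed.

End WilliamsonKernel.

Theorem lemma5p4 (R : realType) (d : nat) (psi : R -> R)
    (gamma : probability R R) :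
  (3 <= d)%N -> arch_copula d psi -> williamson_measure d psi gamma ->
  (strict_gen psi <-> (forall r : R, 0 < r -> (0 < gamma [set` `[0%R, r[])%E)).
Proof.
move=> d_ge3 [[[_ _ psi0 _] _] _] [_ _ psi_int].
have n_gt0 : (0 < d - 1)%N by rewrite subn_gt0 (leq_trans _ d_ge3).
rewrite strict_genP; split.
- move=> psi_neq0 r r_gt0; rewrite lt0e measure_ge0 andbT; apply/eqP => gamma0.
  have rV_gt0 : 0 < r^-1 by rewrite invr_gt0.
  have psi_le0 : ((psi r^-1)%:E <= 0)%E.
    rewrite psi_int // -gamma0 -[X in [set` `[_, X[]]invrK.
    exact: williamson_integral_le_measure.
  have psi_ge0 : (0 <= (psi r^-1)%:E)%E.
    by rewrite psi_int // integral_ge0 // => t _; rewrite lee_fin williamson_kernel_ge0.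
  by move: (psi_neq0 _ (ltW rV_gt0)); rewrite eq_le -!lee_fin psi_le0 psi_ge0.
- move=> gamma_gt0 z; rewrite le_eqVlt => /predU1P[<-|z_gt0]; first by rewrite psi0 oner_neq0.
  have gamma_pos : (0 < (2^-(d - 1))%:E * gamma [set` `[0%R, (2 * z)^-1%R[])%E.
    by rewrite mule_gt0 ?lte_fin ?invr_gt0 ?exprn_gt0 ?gamma_gt0 ?invr_gt0 ?mulr_gt0.
  have : (0 < (psi z)%:E)%E.
    rewrite psi_int //; apply: (lt_le_trans gamma_pos).
    exact: williamson_integral_ge_measure.
  by rewrite lte_fin => /gt_eqF ->.
Qed.
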